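(* Let $\delta\ge1$, $n\ge1$, let $H_1,\dots,H_{\delta+n}$ be general hyperplanes in $\mathbb{P}^n=\mathbb{P}V$ with equations $h_i\in V^*$, and let $Z$ be the set of $\binom{\delta+n}{n}$ points $\bigcap_{i\in L}H_i$, $L\subset\{1,\dots,\delta+n\}$, $|L|=n$. Then the linear system of hypersurfaces of degree $2\delta+1$ singular at every point of $Z$ has the expected codimension $(n+1)\binom{\delta+n}{n}$ in $S^{2\delta+1}V^*$, and it is spanned by the products $h_I=\prod_{i=1}^{\delta+n}h_i^{k_i}$, where $I$ ranges over multi-indices (repetitions allowed) with $|I|=\sum k_i=2\delta+1$, all exponents $k_i\le2$, and support $\#\{i:k_i>0\}\ge\delta+2$. *)

From HB Require Import structures.
From mathcomp Require Import all_boot all_order all_algebra.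
From mathcomp Require Import mpoly.
Set Implicit Arguments. Unset Strict Implicit. Unset Printing Implicit Defensive.
Import Order.TTheory GRing.Theory.
Local Open Scope ring_scope.

Section Defs.
Variable k : fieldType.

(* A linear form on V = k^(n+1), given by its coefficient row vector,
   seen as an element of S^1 V^* = degree-1 forms in {mpoly k[n.+1]}. *)
Definition linform (n : nat) (h : 'rV[k]_n.+1) : {mpoly k[n.+1]} :=
  \sum_(j < n.+1) h 0 j *: 'X_j.

(* p lies in S^d V^* : homogeneous of degree d (0 included). *)
Definition homogeneous (n d : nat) (p : {mpoly k[n]}) : bool :=
  all (fun m => mdeg m == d) (msupp p).

Definition singular_at (n : nat) (F : {mpoly k[n.+1]}) (v : 'rV[k]_n.+1) : Prop :=
  forall j : 'I_n.+1, (mderiv j F).@[fun i => v 0 i] = 0.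

(* F is singular at every point of Z = { cap_{i in L} H_i : |L| = n },
   where H_i is the hyperplane with equation h_i = row i H. *)
Definition singular_on_Z (m n : nat) (H : 'M[k]_(m, n.+1)) (F : {mpoly k[n.+1]}) : Prop :=
  forall L : {set 'I_m}, #|L| = n ->
  forall v : 'rV[k]_n.+1, v != 0 ->
    (forall i, i \in L -> (linform (row i H)).@[fun j => v 0 j] = 0) ->
    singular_at F v.

(* h_I = prod_i h_i^(k_i), with exponent vector e : 'I_m -> {0,1,2}. *)
Definition hprod (m n : nat) (H : 'M[k]_(m, n.+1)) (e : {ffun 'I_m -> 'I_3}) : {mpoly k[n.+1]} :=
  \prod_(i < m) linform (row i H) ^+ e i.

(* |I| = 2 delta + 1 and support of size >= delta + 2 (k_i <= 2 by typing). *)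
Definition admissible (m delta : nat) (e : {ffun 'I_m -> 'I_3}) : bool :=
  ((\sum_(i < m) (e i : nat))%N == (2 * delta).+1)
  && (delta + 2 <= #|[pred i | (e i : nat) != 0%N]|)%N.

Definition lin_indep (n : nat) (s : seq {mpoly k[n]}) : Prop :=
  forall c : 'I_(size s) -> k,
    \sum_(i < size s) c i *: s`_i = 0 -> forall i, c i = 0.

Definition in_span (n : nat) (s : seq {mpoly k[n]}) (F : {mpoly k[n]}) : Prop :=
  exists c : 'I_(size s) -> k, F = \sum_(i < size s) c i *: s`_i.

Definition has_dim (n : nat) (W : {mpoly k[n]} -> Prop) (d : nat) : Prop :=
  exists s : seq {mpoly k[n]}, size s = d /\ (forall F, F \in s -> W F) /\
    lin_indep s /\ (forall F, W F -> in_span s F).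

End Defs.

From HB Require Import structures.
From mathcomp Require Import all_boot all_order all_algebra.
From mathcomp Require Import mpoly.
From mathcomp Require Import ring zify.
From Stdlib Require Import Classical.
Set Implicit Arguments. Unset Strict Implicit. Unset Printing Implicit Defensive.
Import Order.TTheory GRing.Theory.
Local Open Scope ring_scope.

(* Write h_J for prod_i h_i ^ J_i.  For general hyperplanes every n + 1 of the h_i form a
   basis of V^*.  An admissible h_I is singular on Z: at the point p_L of Z at most delta of
   its factors avoid L, so two of them vanish at p_L.  Expanding each variable in n + 1 of
   the h_i, and then trading a factor h_i of maximal exponent for n + 1 forms h_t of
   exponent at most J_i - 2 (which lowers sum_t J_t^2), every form of degree 2 delta + 1
   becomes a combination of the admissible h_I and of the forms
   q_(L,j) = x_j prod_(i notin L) h_i^2, |L| = n.  A combination of the q_(L,j) that is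
   singular on Z vanishes: at p_L every q_(L',j) with L' <> L is singular, and by Euler's
   formula (prod_(i notin L) h_i^2) l is singular at p_L only if the linear form l is 0
   (characteristic 0).  Hence the admissible h_I span the singular forms, and the
   (n + 1) C(delta + n, n) forms q_(L,j) complete them to a basis of S^(2 delta + 1) V^*.
   Generality is the nonvanishing of all maximal minors of the coefficient matrix. *)

Section FiniteSpans.
Variables (R : fieldType) (V : lmodType R).
Implicit Types (s t : seq V) (x y F : V) (S : V -> Prop).

Definition subspace S := S 0 /\ forall a x y, S x -> S y -> S (a *: x + y).

Lemma subspace0 S : subspace S -> S 0. Proof. by case. Qed.

Lemma subspaceD S x y : subspace S -> S x -> S y -> S (x + y).
Proof. by case=> _ hS Sx Sy; have := hS 1 _ _ Sx Sy; rewrite scale1r. Qed.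

Lemma subspaceZ S a x : subspace S -> S x -> S (a *: x).
Proof. by move=> [S0 hS] Sx; have := hS a _ _ Sx S0; rewrite addr0. Qed.

Lemma subspaceB S x y : subspace S -> S x -> S y -> S (x - y).
Proof. by move=> hS Sx Sy; rewrite -scaleN1r addrC; apply: (proj2 hS). Qed.

Lemma subspace_sum S (I : Type) (r : seq I) (P : pred I) (f : I -> V) :
  subspace S -> (forall i, P i -> S (f i)) -> S (\sum_(i <- r | P i) f i).
Proof.
move=> hS hf; elim/big_rec: _ => [|i x Pi Sx]; first exact: subspace0.
by apply: subspaceD => //; apply: hf.
Qed.

Fixpoint spans s F : Prop :=
  if s is x :: s' then exists c, spans s' (F - c *: x) else F = 0.

Fixpoint indep s : Prop :=
  if s is x :: s' then ~ spans s' x /\ indep s' else True.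

Lemma spans_subspace s : subspace (spans s).
Proof.
elim: s => [|x s [IH0 IH]] /=; first by split=> // a _ _ -> ->; rewrite scaler0 addr0.
split; first by exists 0; rewrite scale0r subr0.
move=> a y z [c1 h1] [c2 h2]; exists (a * c1 + c2).
have -> : a *: y + z - (a * c1 + c2) *: x = a *: (y - c1 *: x) + (z - c2 *: x).
  by rewrite scalerDl scalerBr scalerA addrACA opprD.
exact: IH.
Qed.

Lemma spans_cons x s F : spans s F -> spans (x :: s) F.
Proof. by exists 0; rewrite scale0r subr0. Qed.

Lemma spans_mem s x : x \in s -> spans s x.
Proof.
elim: s => [|y s IH] //=; rewrite inE => /orP [/eqP ->|/IH]; last exact: spans_cons.
by exists 1; rewrite scale1r subrr; apply: subspace0 (spans_subspace s).
Qed.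

Lemma spans_min S s F : subspace S -> (forall x, x \in s -> S x) -> spans s F -> S F.
Proof.
move=> hS; elim: s F => [|x s IH] F hs /=; first by move=> ->; exact: subspace0.
move=> [c hc]; rewrite -(subrK (c *: x) F); apply: subspaceD => //.
  by apply: IH => // y ys; apply: hs; rewrite inE ys orbT.
by apply: subspaceZ => //; apply: hs; rewrite inE eqxx.
Qed.

Lemma spans_catl s t F : spans s F -> spans (s ++ t) F.
Proof.
apply: spans_min (spans_subspace _) _ => x xs.
by apply: spans_mem; rewrite mem_cat xs.
Qed.

Lemma spans_catr s t F : spans t F -> spans (s ++ t) F.
Proof.
apply: spans_min (spans_subspace _) _ => x xt.
by apply: spans_mem; rewrite mem_cat xt orbT.
Qed.

Lemma spans_catP s t F :
  spans (s ++ t) F -> exists F1 F2, [/\ spans s F1, spans t F2 & F = F1 + F2].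
Proof.
elim: s F => [|x s IH] F /=; first by move=> h; exists 0, F; rewrite add0r.
move=> [c /IH [F1 [F2 [h1 h2 e]]]]; exists (F1 + c *: x), F2; split => //.
  by exists c; rewrite addrK.
by rewrite addrAC -e subrK.
Qed.

Lemma indep_cat s t : indep s -> indep t ->
  (forall F, spans s F -> spans t F -> F = 0) -> indep (s ++ t).
Proof.
elim: s => [|x s IH] //= [nx ins] int hdis; split; last first.
  by apply: IH => // F hs ht; apply: hdis => //; apply: spans_cons.
move/spans_catP=> [F1 [F2 [h1 h2 e]]]; apply: nx.
suff F20 : F2 = 0 by rewrite e F20 addr0.
apply: hdis => //; have -> : F2 = x - F1 by rewrite e addrC addKr.
apply: subspaceB (spans_subspace _) _ (spans_cons _ h1).
by apply: spans_mem; rewrite inE eqxx.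
Qed.

Lemma indep_spanning_subseq s : exists t, [/\ indep t,
  (forall x, x \in t -> x \in s) & (forall x, x \in s -> spans t x)].
Proof.
elim: s => [|x s [t [it ts st]]]; first by exists [::].
have [xt|nxt] := classic (spans t x).
  exists t; split => // [y /ts|y]; first by rewrite inE => ->; rewrite orbT.
  by rewrite inE => /orP [/eqP ->|/st].
exists (x :: t); split => //=.
  by move=> y; rewrite !inE => /orP [->|/ts ->]; rewrite ?orbT.
move=> y; rewrite inE => /orP [/eqP ->|/st /(spans_cons x) //].
by exists 1; rewrite scale1r subrr; apply: subspace0 (spans_subspace t).
Qed.

Lemma spans_map (I : eqType) (f : I -> V) (r : seq I) F :
  uniq r -> spans (map f r) F -> exists c : I -> R, F = \sum_(i <- r) c i *: f i.
Proof.
elim: r F => [|x r IH] F /=; first by move=> _ ->; exists (fun _ => 0); rewrite big_nil.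
move=> /andP [xr ur] [a /(IH _ ur) [c hc]].
exists (fun i => if i == x then a else c i); rewrite big_cons eqxx.
have -> : \sum_(i <- r) (if i == x then a else c i) *: f i = \sum_(i <- r) c i *: f i.
  by apply: eq_big_seq => i ir; case: eqP => // eix; move: xr; rewrite -eix ir.
by rewrite -hc addrC subrK.
Qed.

Lemma indep_map (I : eqType) (f : I -> V) (r : seq I) : uniq r ->
  (forall c : I -> R, \sum_(i <- r) c i *: f i = 0 -> forall i, i \in r -> c i = 0) ->
  indep (map f r).
Proof.
elim: r => [|x r IH] //= /andP [xr ur] hc.
have off_x (c : I -> R) d : \sum_(i <- r) (if i == x then d else c i) *: f i =
    \sum_(i <- r) c i *: f i.
  by apply: eq_big_seq => i ir; case: eqP => // eix; move: xr; rewrite -eix ir.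
split.
  move/(spans_map ur)=> [c hx].
  have := hc (fun i => if i == x then 1 else - c i).
  rewrite big_cons eqxx scale1r off_x.
  under eq_bigr do rewrite scaleNr.
  rewrite sumrN -hx subrr => /(_ erefl x); rewrite inE eqxx => /(_ isT) /eqP.
  by rewrite oner_eq0.
apply: IH => // c hs i ir.
have := hc (fun j => if j == x then 0 else c j); rewrite big_cons eqxx scale0r add0r.
rewrite off_x => /(_ hs i); rewrite inE ir orbT => /(_ isT).
by case: eqP => // eix; move: xr; rewrite -eix ir.
Qed.

End FiniteSpans.

Section PolySpans.
Variables (k : fieldType) (n : nat).
Implicit Types (s : seq {mpoly k[n]}) (F : {mpoly k[n]}).

Lemma in_spanE s F : in_span s F <-> spans s F.
Proof.
elim: s F => [|x s IH] F /=.
  by split=> [[c ->]|->]; [rewrite big_ord0|exists (fun _ => 0); rewrite big_ord0].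
split.
  move=> [c ->]; rewrite big_ord_recl /=; exists (c ord0).
  by rewrite addrAC subrr add0r; apply/IH; exists (fun i => c (lift ord0 i)).
move=> [a /IH [c hc]].
exists (fun i : 'I_(size s).+1 => if unlift ord0 i is Some j then c j else a).
rewrite big_ord_recl /= unlift_none; under eq_bigr do rewrite liftK.
by rewrite -hc addrC subrK.
Qed.

Lemma indep_lin_indep s : indep s -> lin_indep s.
Proof.
elim: s => [|x s IH] /=; first by move=> _ c _ [].
move=> [nx hs] c; rewrite big_ord_recl /= => h0.
have c0 : c ord0 = 0.
  apply: contra_not_eq nx => nc; apply/in_spanE.
  exists (fun i => - (c ord0)^-1 * c (lift ord0 i)).
  have -> : x = - (c ord0)^-1 *: \sum_(i < size s) c (lift ord0 i) *: s`_i.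
    have -> : \sum_(i < size s) c (lift ord0 i) *: s`_i = - (c ord0 *: x).
      by apply/eqP; rewrite -addr_eq0 addrC h0.
    by rewrite scaleNr scalerN opprK scalerA mulVf ?scale1r.
  by rewrite scaler_sumr; apply: eq_bigr => i _; rewrite scalerA.
move: h0; rewrite c0 scale0r add0r => /(IH hs) hc i.
by case: (unliftP ord0 i) => [j ->|->].
Qed.

End PolySpans.

Section LinearForms.
Variables (k : fieldType) (n : nat).
Local Notation N := n.+1.
Local Notation poly := {mpoly k[N]}.
Implicit Types (vv : 'I_N -> k) (p q : poly) (r : 'rV[k]_N).

Lemma mderivXU j t : mderiv j ('X_t : poly) = ((t == j)%:R)%:MP.
Proof.
rewrite mderivX mnm1E; case: eqP => [->|_]; last by rewrite scale0r mpolyC0.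
have -> : (U_(j) - U_(j))%MM = 0%MM by apply/mnmP => i; rewrite !mnmE subnn.
by rewrite mpolyX0 scale1r mpolyC1.
Qed.

Lemma linform_sum (I : Type) (s : seq I) (c : I -> k) (F : I -> 'rV[k]_N) :
  linform (\sum_(i <- s) c i *: F i) = \sum_(i <- s) c i *: linform (F i).
Proof.
rewrite /linform; under eq_bigr do rewrite summxE scaler_suml.
rewrite exchange_big; apply: eq_bigr => i _; rewrite scaler_sumr.
by apply: eq_bigr => j _; rewrite mxE scalerA.
Qed.

Lemma mderiv_linform j r : mderiv j (linform r) = (r 0 j)%:MP.
Proof.
rewrite /linform raddf_sum (bigD1 j) //= mderivZ mderivXU eqxx.
rewrite big1 ?addr0; first by rewrite -mul_mpolyC -mpolyCM mulr1.
by move=> t /negbTE tj; rewrite mderivZ mderivXU tj mpolyC0 scaler0.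
Qed.

Lemma meval_linform vv r : (linform r).@[vv] = \sum_j r 0 j * vv j.
Proof. by rewrite /linform raddf_sum /=; apply: eq_bigr => j _; rewrite mevalZ mevalXU. Qed.

Lemma homogeneousE d p : homogeneous d p = (p \is d.-homog).
Proof. by rewrite dhomogE. Qed.

Lemma linform_homog r : linform r \is 1.-homog.
Proof. by apply: rpred_sum => j _; apply: dhomogZ; rewrite dhomogX /= mdeg1. Qed.

Lemma meval_mderivM2_eq0 vv p q f j : p.@[vv] = 0 -> q.@[vv] = 0 ->
  (mderiv j (p * (q * f))).@[vv] = 0.
Proof. by move=> p0 q0; rewrite !mderivM !(mevalD, mevalM) p0 q0 !(mul0r, mulr0, addr0). Qed.

Definition euler vv p := \sum_j vv j * (mderiv j p).@[vv].

Lemma eulerM vv p q : euler vv (p * q) = euler vv p * q.@[vv] + p.@[vv] * euler vv q.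
Proof.
rewrite /euler mulr_suml mulr_sumr -big_split; apply: eq_bigr => j _.
by rewrite mderivM mevalD !mevalM /=; ring.
Qed.

Lemma euler1 vv : euler vv 1 = 0.
Proof. by rewrite /euler big1 // => t _; rewrite -mpolyC1 mderivC meval0 mulr0. Qed.

Lemma euler_subspace vv d : subspace (fun p => euler vv p = d%:R * p.@[vv]).
Proof.
split; first by rewrite meval0 mulr0 /euler big1 // => j _; rewrite mderiv0 meval0 mulr0.
move=> a p q hp hq.
have -> : euler vv (a *: p + q) = a * euler vv p + euler vv q.
  rewrite /euler mulr_sumr -big_split /=; apply: eq_bigr => j _.
  by rewrite mderivD mderivZ mevalD mevalZ; ring.
by rewrite hp hq mevalD mevalZ; ring.
Qed.

Lemma eulerXn vv j e : euler vv ('X_j ^+ e) = e%:R * ('X_j ^+ e).@[vv].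
Proof.
elim: e => [|e IH]; first by rewrite expr0 mul0r euler1.
rewrite exprS eulerM IH mevalM mevalXU -natr1 mulrDl mul1r addrC; congr (_ + _); first by ring.
rewrite /euler (bigD1 j) //= mderivXU eqxx mevalC big1 ?addr0 /=; first by rewrite mulr1.
by move=> t tj; rewrite mderivXU eq_sym (negbTE tj) mevalC mulr0.
Qed.

Lemma euler_monomial vv (m : 'X_{1..N}) : euler vv 'X_[m] = (mdeg m)%:R * 'X_[m].@[vv].
Proof.
rewrite mpolyXE_id mdegE; elim: (index_enum _) => [|j s IH].
  by rewrite !big_nil euler1 mul0r.
by rewrite !big_cons eulerM IH eulerXn mevalM natrD; ring.
Qed.

Lemma euler_homog vv d p : p \is d.-homog -> euler vv p = d%:R * p.@[vv].
Proof.
move=> hp; rewrite [p]mpolyE big_seq.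
apply: subspace_sum (euler_subspace vv d) _ => m hm.
apply: subspaceZ (euler_subspace vv d) _.
by rewrite euler_monomial -(dhomog_mf hp hm).
Qed.

Lemma mderiv_mul_linform_eq0 vv d p r :
  p \is d.-homog -> d.+1%:R != 0 :> k -> p.@[vv] != 0 ->
  (forall j, (mderiv j (p * linform r)).@[vv] = 0) -> r = 0.
Proof.
move=> hp hd p0 hs.
have hj j : (mderiv j p).@[vv] * (linform r).@[vv] + p.@[vv] * r 0 j = 0.
  by have := hs j; rewrite mderivM mevalD !mevalM mderiv_linform mevalC.
(* Euler's formula: summing vv j times the j-th equation gives (d + 1) p(vv) l(vv) = 0 *)
have hL : (linform r).@[vv] = 0.
  have : \sum_j vv j * ((mderiv j p).@[vv] * (linform r).@[vv] + p.@[vv] * r 0 j)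
      = euler vv p * (linform r).@[vv] + p.@[vv] * (linform r).@[vv].
    rewrite [in X in _ = _ + X]meval_linform /euler mulr_suml mulr_sumr -big_split /=.
    by apply: eq_bigr => j _; ring.
  rewrite big1 => [|j _]; last by rewrite hj mulr0.
  have -> : euler vv p * (linform r).@[vv] + p.@[vv] * (linform r).@[vv]
      = d.+1%:R * (p.@[vv] * (linform r).@[vv]) by rewrite (euler_homog vv hp) -natr1; ring.
  by move/esym/eqP; rewrite !mulf_eq0 (negbTE hd) (negbTE p0) => /eqP.
apply/rowP => j; have := hj j; rewrite hL mulr0 add0r mxE => /eqP.
by rewrite mulf_eq0 (negbTE p0) => /eqP.
Qed.

End LinearForms.

Section ExponentShift.
Variable I : finType.
Implicit Types (f g J : I -> nat).

Lemma sum_nat_mem (P : {pred I}) : (\sum_x ((x \in P) : nat))%N = #|P|.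
Proof. by rewrite -sum1_card [RHS]big_mkcond; apply: eq_bigr => x _; case: (x \in P). Qed.

Lemma sum_nat_update2 f g i j : i != j ->
  (forall x, x != i -> x != j -> g x = f x) ->
  (\sum_x g x + (f i + f j) = \sum_x f x + (g i + g j))%N.
Proof.
move=> ij hgf; rewrite (bigD1 i) //= (bigD1 j) //=; last by rewrite eq_sym.
rewrite [in RHS](bigD1 i) //= [in RHS](bigD1 j) //=; last by rewrite eq_sym.
rewrite (eq_bigr f) => [|x /andP [xi xj]]; last by rewrite hgf.
lia.
Qed.

Definition shift J i j x := (J x - (x == i) + (x == j))%N.

Definition sumsq J := (\sum_x J x * J x)%N.

Lemma shift_src J i j : i != j -> shift J i j i = (J i).-1.
Proof. by move=> ij; rewrite /shift eqxx (negbTE ij) addn0 subn1. Qed.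

Lemma shift_dst J i j : i != j -> shift J i j j = (J j).+1.
Proof. by move=> ij; rewrite /shift eqxx eq_sym (negbTE ij) subn0 addn1. Qed.

Lemma shift_other J i j x : x != i -> x != j -> shift J i j x = J x.
Proof. by move=> /negbTE xi /negbTE xj; rewrite /shift xi xj subn0 addn0. Qed.

Lemma sum_shift J i j : i != j -> (0 < J i)%N -> (\sum_x shift J i j x = \sum_x J x)%N.
Proof.
move=> ij Ji; have := sum_nat_update2 ij (@shift_other J i j).
rewrite shift_src // shift_dst //; lia.
Qed.

Lemma sumsq_shift J i j : i != j -> (J j + 2 <= J i)%N -> (sumsq (shift J i j) < sumsq J)%N.
Proof.
move=> ij hJ; have := @sum_nat_update2 (fun x => J x * J x)%N
  (fun x => shift J i j x * shift J i j x)%N i j ij.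
move=> /(_ (fun x xi xj => congr1 (fun y => y * y)%N (shift_other J xi xj))).
rewrite shift_src // shift_dst // /sumsq; nia.
Qed.

End ExponentShift.

Lemma prod_homog (k : fieldType) (N : nat) (I : Type) (r : seq I) (P : pred I)
    (F : I -> {mpoly k[N]}) (d : I -> nat) :
  (forall i, P i -> F i \is (d i).-homog) ->
  \prod_(i <- r | P i) F i \is (\sum_(i <- r | P i) d i)%N.-homog.
Proof.
move=> hF; elim/big_rec2: _ => [|i d' q Pi hq]; first exact: dhomog1.
exact: dhomogM (hF i Pi) hq.
Qed.

Section Hyperplanes.
Variables (k : fieldType) (delta n : nat) (H : 'M[k]_(delta + n, n.+1)).
Local Notation m := (delta + n)%N.
Local Notation N := n.+1.
Local Notation poly := {mpoly k[N]}.
Local Notation at_pt v := (fun j : 'I_N => v 0 j).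

Definition hyp (i : 'I_m) : poly := linform (row i H).

Definition hmon (J : 'I_m -> nat) : poly := \prod_(i < m) hyp i ^+ J i.

Definition hsq (A : {set 'I_m}) : poly := \prod_(i in A) hyp i ^+ 2.

Definition qform (p : {set 'I_m} * 'I_N) : poly := hsq (~: p.1) * 'X_(p.2).

Definition qindex : seq ({set 'I_m} * 'I_N) :=
  [seq (L, j) | L <- enum [set L : {set 'I_m} | #|L| == n], j <- enum 'I_N].

Definition qforms : seq poly := map qform qindex.

Definition admissible_hprods : seq poly :=
  [seq hprod H e | e <- enum [pred e : {ffun 'I_m -> 'I_3} | admissible delta e]].

Definition general := forall s : 'I_N -> 'I_m, injective s ->
  \det (\matrix_(a, b) H (s a) b) != 0.

Lemma hmon_eq J K : J =1 K -> hmon J = hmon K.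
Proof. by move=> eJK; apply: eq_bigr => i _; rewrite eJK. Qed.

Lemma hmon0 : hmon (fun _ => 0%N) = 1.
Proof. by rewrite /hmon big1 // => i _; rewrite expr0. Qed.

Lemma hmonD J K : hmon (fun i => J i + K i)%N = hmon J * hmon K.
Proof. by rewrite /hmon -big_split; apply: eq_bigr => i _; rewrite exprD. Qed.

Lemma hmon1 i : hmon (fun t => (t == i) : nat) = hyp i.
Proof.
rewrite /hmon (bigD1 i) //= eqxx expr1 big1 ?mulr1 // => t /negbTE ->.
by rewrite expr0.
Qed.

Lemma hmon_homog J : hmon J \is (\sum_i J i)%N.-homog.
Proof.
apply: prod_homog => i _.
by have := dhomogMn (J i) (linform_homog (row i H)); rewrite mul1n.
Qed.

Lemma hsq_homog A : hsq A \is (2 * #|A|)%N.-homog.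
Proof.
rewrite mulnC -sum_nat_const; apply: prod_homog => i _.
by have := dhomogMn 2 (linform_homog (row i H)); rewrite mul1n.
Qed.

Lemma card_setC_delta (L : {set 'I_m}) : #|L| = n -> #|~: L| = delta.
Proof. by move=> hL; have := cardsC L; rewrite card_ord hL addnC => /addIn. Qed.

Lemma qform_homog (p : {set 'I_m} * 'I_N) : #|p.1| = n -> qform p \is (2 * delta).+1.-homog.
Proof.
move=> hL; rewrite -[(2 * delta).+1]addn1 -(card_setC_delta hL).
apply: dhomogM; first exact: hsq_homog.
by rewrite dhomogX /= mdeg1.
Qed.

Lemma qindexP (p : {set 'I_m} * 'I_N) : (p \in qindex) = (#|p.1| == n).
Proof.
case: p => L j; apply/allpairsP/idP => [[q [q1 _ e]]|hL].
  by move: q1; rewrite mem_enum inE; case: e => -> _.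
by exists (L, j); rewrite !mem_enum inE hL.
Qed.

Lemma qindex_uniq : uniq qindex.
Proof. by apply: allpairs_uniq; rewrite ?enum_uniq // => [[a b] [c d] _ _ /= [-> ->]]. Qed.

Lemma size_qforms : size qforms = ('C(m, n) * N)%N.
Proof.
rewrite size_map size_allpairs -!cardE card_ord.
by have := card_draws 'I_m n; rewrite card_ord => ->.
Qed.

Lemma exists_common_zero (L : {set 'I_m}) : #|L| = n ->
  exists v : 'rV[k]_N, v != 0 /\ forall i, i \in L -> (hyp i).@[at_pt v] = 0.
Proof.
move=> hL.
pose A : 'M[k]_(n, N) := \matrix_(a, b) H (enum_val (cast_ord (esym hL) a)) b.
have hK := mulmx_ker A^T; have rK := mxrank_ker A^T.
set K := kermx A^T in hK rK *; clearbody K.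
have [/existsP [a ha]|/existsPn K0] := boolP [exists a, row a K != 0]; last first.
  suff : K = 0 by move=> K0'; move: rK; rewrite K0' mxrank0; have := rank_leq_col A^T; lia.
  by apply/row_matrixP => a; rewrite row0; apply/eqP; have := K0 a; rewrite negbK.
exists (row a K); split => // i iL.
move: hK => /(congr1 (row a)); rewrite row_mul row0 => /rowP.
move=> /(_ (cast_ord hL (enum_rank_in iL i))); rewrite !mxE => hi.
rewrite /hyp meval_linform -[RHS]hi; apply: eq_bigr => b _; rewrite !mxE mulrC.
by rewrite cast_ordK (enum_rankK_in iL iL).
Qed.

Lemma singular_hmon (v : 'rV[k]_N) (L : {set 'I_m}) J a b :
  (forall i, i \in L -> (hyp i).@[at_pt v] = 0) ->
  a \in L -> b \in L -> a != b -> (0 < J a)%N -> (0 < J b)%N ->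
  singular_at (hmon J) v.
Proof.
move=> hv aL bL ab Ja Jb j.
have -> : hmon J = hyp a * (hyp b * (hyp a ^+ (J a).-1 * (hyp b ^+ (J b).-1 *
    \prod_(i < m | (i != a) && (i != b)) hyp i ^+ J i))).
  rewrite /hmon (bigD1 a) //= (bigD1 b) //=; last by rewrite eq_sym.
  rewrite -(prednK Ja) -(prednK Jb) !exprS /=; ring.
exact: meval_mderivM2_eq0 (hv _ aL) (hv _ bL).
Qed.

Lemma singular_qform (v : 'rV[k]_N) (L L' : {set 'I_m}) j :
  (forall i, i \in L -> (hyp i).@[at_pt v] = 0) ->
  #|L| = n -> #|L'| = n -> L' != L -> singular_at (qform (L', j)) v.
Proof.
move=> hv hL hL' LL'.
have [i iL iL'] : exists2 i, i \in L & i \notin L'.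
  have [sub|/subsetPn //] := boolP (L \subset L').
  by move: LL'; rewrite eq_sym eqEcard sub hL hL' leqnn.
rewrite /qform /hsq /= (bigD1 i) ?inE //= expr2 => t.
rewrite -!mulrA; exact: meval_mderivM2_eq0 (hv _ iL) (hv _ iL).
Qed.

Definition hq_span := spans (admissible_hprods ++ qforms).

Lemma hq_span_subspace : subspace hq_span.
Proof. exact: spans_subspace. Qed.

Lemma hprod_in_hq_span e : admissible delta e -> hq_span (hprod H e).
Proof.
move=> he; apply: spans_catl; apply: spans_mem; apply/mapP.
by exists e; rewrite ?mem_enum.
Qed.

Lemma hsq_hyp_in_hq_span (A : {set 'I_m}) j : #|A| = delta -> hq_span (hsq A * hyp j).
Proof.
move=> hA; have hL : #|~: A| = n by have := cardsC A; rewrite card_ord hA => /addnI.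
rewrite /hyp /linform mulr_sumr; apply: subspace_sum hq_span_subspace _ => t _.
rewrite -scalerAr; apply: subspaceZ hq_span_subspace _.
apply: spans_catr; apply: spans_mem; apply/mapP; exists (~: A, t).
  by rewrite qindexP /= hL.
by rewrite /qform /= setCK.
Qed.

Lemma hmon_le2_in_hq_span J : (\sum_i J i)%N = (2 * delta).+1 ->
  (forall i, J i <= 2)%N -> hq_span (hmon J).
Proof.
move=> hs hle.
pose e := [ffun i => inord (J i) : 'I_3].
have eJ i : (e i : nat) = J i by rewrite ffunE inordK // ltnS.
have [hsupp|hsupp] := leqP (delta + 2) #|[pred i | (e i : nat) != 0%N]|.
  have -> : hmon J = hprod H e by apply: eq_bigr => i _; rewrite eJ.
  apply: hprod_in_hq_span; rewrite /admissible hsupp andbT -hs.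
  by apply/eqP/eq_bigr => i _; rewrite eJ.
(* a small support forces delta exponents 2 and a single exponent 1 *)
pose A := [set i | J i == 2%N]; pose B := [set i | J i == 1%N].
have sJ : (\sum_i J i = 2 * #|A| + #|B|)%N.
  rewrite -!sum_nat_mem big_distrr -big_split /=; apply: eq_bigr => i _.
  by rewrite !inE; have := hle i; case: (J i) => [|[|[|]]].
have sS : #|[pred i | (e i : nat) != 0%N]| = (#|A| + #|B|)%N.
  rewrite -!sum_nat_mem -big_split /=; apply: eq_bigr => i _.
  by rewrite !inE eJ; have := hle i; case: (J i) => [|[|[|]]].
have cA : #|A| = delta by lia.
have /cards1P [j Bj] : #|B| == 1%N by apply/eqP; lia.
have Jj : J j = 1%N by have := set11 j; rewrite -Bj inE => /eqP.
suff -> : hmon J = hsq A * hyp j by apply: hsq_hyp_in_hq_span.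
rewrite /hmon (bigD1 j) //= Jj expr1 mulrC /hsq; congr (_ * _).
rewrite big_mkcond [RHS]big_mkcond /=; apply: eq_bigr => i _.
rewrite inE; case: eqP => [-> |ij]; first by rewrite Jj.
have : i \notin B by rewrite Bj in_set1; apply/eqP.
by rewrite inE /=; have := hle i; case: (J i) => [|[|[|]]].
Qed.

Lemma hmon_crowded_in_hq_span J i : (\sum_t J t)%N = (2 * delta).+1 ->
  (forall t, J t <= J i)%N -> (3 <= J i)%N ->
  (delta < #|[set t | (t != i) && (J i <= (J t).+1)]| + 2)%N -> hq_span (hmon J).
Proof.
move=> hs hmax h3; set Bs := [set t | _] => hB.
have iB : i \notin Bs by rewrite inE eqxx.
have hsplit : (\sum_t J t = J i + \sum_(t in Bs) J t + \sum_(t | t \notin i |: Bs) J t)%N.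
  by rewrite (bigID (fun t => t \in i |: Bs)) /= big_setU1.
have lowB : (#|Bs| * (J i).-1 <= \sum_(t in Bs) J t)%N.
  rewrite -sum_nat_const; apply: leq_sum => t; rewrite inE => /andP [_ h]; lia.
have low2 : (2 * #|Bs| <= #|Bs| * (J i).-1)%N.
  by rewrite mulnC leq_mul2l; apply/orP; right; lia.
set S1 := (\sum_(t in Bs) J t)%N in hsplit lowB.
set S2 := (\sum_(t | t \notin i |: Bs) J t)%N in hsplit.
set X := (#|Bs| * (J i).-1)%N in lowB low2.
(* 2 delta + 1 >= J i + 2 |Bs| >= 3 + 2 (delta - 1): all these inequalities are equalities *)
have hJi : J i = 3%N by lia.
have hS2 : S2 = 0%N by lia.
have hS1 : S1 = (2 * #|Bs|)%N by lia.
have hb : #|Bs|.+1 = delta by lia.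
have J2 t : t \in Bs -> J t = 2%N.
  have : (\sum_(t in Bs) (J t - 2) == 0)%N.
    have e : (S1 = \sum_(t in Bs) 2 + \sum_(t in Bs) (J t - 2))%N.
      rewrite /S1 -big_split /=; apply: eq_bigr => t'; rewrite inE => /andP [_ h].
      lia.
    by move: e; rewrite sum_nat_const hS1 mulnC; lia.
  rewrite sum_nat_eq0 => /forallP /(_ t) hf tB; move: hf; rewrite tB /=.
  by move: tB; rewrite inE => /andP [_ h] /eqP; lia.
have J0 t : t \notin i |: Bs -> J t = 0%N.
  by move: hS2 => /eqP; rewrite /S2 sum_nat_eq0 => /forallP /(_ t) /implyP h /h /eqP.
suff -> : hmon J = hsq (i |: Bs) * hyp i.
  by apply: hsq_hyp_in_hq_span; rewrite cardsU1 iB add1n hb.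
rewrite /hsq big_setU1 //= /hmon (bigD1 i) //= hJi.
have -> : \prod_(t < m | t != i) hyp t ^+ J t = \prod_(t in Bs) hyp t ^+ 2.
  rewrite big_mkcond [RHS]big_mkcond /=; apply: eq_bigr => t _.
  case: eqP => [->|ti]; first by rewrite (negbTE iB).
  case: ifP => tB; first by rewrite J2.
  by rewrite J0 ?expr0 // in_setU1 tB orbF; apply/eqP.
by rewrite !exprS expr0; ring.
Qed.

Definition singular_form (F : poly) := homogeneous (2 * delta).+1 F /\ singular_on_Z H F.

Lemma singular_form_subspace : subspace singular_form.
Proof.
split.
  split; first by rewrite homogeneousE rpred0.
  by move=> L _ v _ _ j; rewrite mderiv0 meval0.
move=> a x y [hx sx] [hy sy]; split.
  by move: hx hy; rewrite !homogeneousE => hx hy; apply: dhomogD => //; apply: dhomogZ.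
move=> L hL v v0 hv j.
by rewrite mderivD mderivZ mevalD mevalZ (sx L hL v v0 hv j) (sy L hL v v0 hv j) mulr0 addr0.
Qed.

Lemma hprod_singular e : admissible delta e -> singular_form (hprod H e).
Proof.
move=> /andP [/eqP hs hsupp]; split.
  by rewrite homogeneousE -hs; exact: (hmon_homog (fun i => e i : nat)).
move=> L hL v v0 hv.
(* at most delta factors of h_I avoid L, so at least two factors vanish at the point *)
pose SP := [set i | (e i : nat) != 0%N].
have cSP : (delta + 2 <= #|SP|)%N by rewrite (eq_card (B := [pred i | (e i : nat) != 0%N])) // => i; rewrite inE.
have cD : (#|SP :\: L| <= delta)%N.
  rewrite -[X in (_ <= X)%N](card_setC_delta hL).
  by apply: subset_leq_card; rewrite setDE subsetIr.
have /card_gt1P [a [b [aS bS ab]]] : (1 < #|SP :&: L|)%N.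
  move: cSP cD; rewrite -(cardsID L SP).
  by move: #|SP :&: L| #|SP :\: L| => x y; lia.
move: aS bS; rewrite !inE => /andP [ea aL] /andP [eb bL].
by apply: (singular_hmon (J := fun i => e i : nat) hv aL bL ab); rewrite lt0n.
Qed.

Section General.
Hypotheses (hchar : [pchar k] =i pred0) (hgen : general) (hdelta : (0 < delta)%N).

Lemma minor_unitmx (s : 'I_N -> 'I_m) : injective s -> \matrix_(a, b) H (s a) b \in unitmx.
Proof. by move=> sinj; rewrite unitmxE unitfE; exact: hgen. Qed.

Lemma general_hyp_neq0 (v : 'rV[k]_N) (L : {set 'I_m}) i : #|L| = n -> v != 0 ->
  (forall i, i \in L -> (hyp i).@[at_pt v] = 0) -> i \notin L -> (hyp i).@[at_pt v] != 0.
Proof.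
move=> hL v0 hv iL; apply/eqP => hi.
have hS : #|i |: L| = N by rewrite cardsU1 iL hL.
pose s (a : 'I_N) := enum_val (cast_ord (esym hS) a).
have sinj : injective s by move=> a b /enum_val_inj /cast_ord_inj.
pose M := \matrix_(a, b) H (s a) b.
have Mu : M \in unitmx := minor_unitmx sinj.
have hM : M *m v^T = 0.
  apply/matrixP => a c; rewrite !mxE.
  have : s a \in i |: L by exact: enum_valP.
  rewrite in_setU1 => sa.
  transitivity ((hyp (s a)).@[at_pt v]); last by case/orP: sa => [/eqP ->|/hv ->].
  by rewrite meval_linform; apply: eq_bigr => b _; rewrite /M !mxE (ord1 c).
move: v0; have : v^T = 0 by rewrite -(mulKmx Mu v^T) hM mulmx0.
by rewrite -trmx0 => /trmx_inj ->; rewrite eqxx.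
Qed.

Lemma general_linform (s : 'I_N -> 'I_m) (r : 'rV[k]_N) : injective s ->
  exists u : 'I_N -> k, linform r = \sum_a u a *: hyp (s a).
Proof.
move=> sinj; pose M := \matrix_(a, b) H (s a) b.
have Mu : M \in unitmx := minor_unitmx sinj.
exists (fun a => (r *m invmx M) 0 a).
have er : r = \sum_a (r *m invmx M) 0 a *: row (s a) H.
  rewrite -{1}(mulmxKV Mu r) mulmx_sum_row; apply: eq_bigr => a _.
  by congr (_ *: _); apply/rowP => b; rewrite !mxE.
by rewrite {1}er linform_sum.
Qed.

Lemma singular_qforms_coef_eq0 (c : {set 'I_m} * 'I_N -> k) :
  singular_on_Z H (\sum_(p <- qindex) c p *: qform p) ->
  forall p, p \in qindex -> c p = 0.
Proof.
move=> hsing [L j0]; rewrite qindexP /= => /eqP hL.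
have [v [v0 hv]] := exists_common_zero hL.
pose r : 'rV[k]_N := \row_j c (L, j).
suff /rowP /(_ j0) : r = 0 by rewrite !mxE.
have eL : \sum_(j <- enum 'I_N) c (L, j) *: qform (L, j) = hsq (~: L) * linform r.
  rewrite /linform mulr_sumr big_enum /=; apply: eq_bigr => j _.
  by rewrite /qform /= mxE scalerAr.
apply: (mderiv_mul_linform_eq0 (vv := at_pt v) (hsq_homog (~: L))).
- by have /pcharf0P -> := hchar.
- rewrite /hsq rmorph_prod /=; apply/prodf_neq0 => i; rewrite inE => iL.
  by rewrite rmorphXn expf_neq0 //; exact: general_hyp_neq0 hL v0 hv iL.
move=> t; have := hsing L hL v v0 hv t.
rewrite /qindex big_allpairs (bigD1_seq L) /= ?enum_uniq ?mem_enum ?inE ?hL // eL.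
rewrite mderivD mevalD [X in _ + X](_ : _ = 0) ?addr0 //.
rewrite (raddf_sum (mderiv t)) raddf_sum /= big1_seq // => L' /andP [LL' L'n].
rewrite (raddf_sum (mderiv t)) raddf_sum /= big1_seq // => j _.
move: L'n; rewrite mem_enum inE => /eqP hL'.
by rewrite mderivZ mevalZ (singular_qform j hv hL hL' LL') mulr0.
Qed.

Lemma hmon_shift J i (C : {set 'I_m}) : (N <= #|C|)%N -> (0 < J i)%N ->
  exists u : 'I_N -> k, exists s : 'I_N -> 'I_m,
    (forall a, s a \in C) /\ hmon J = \sum_a u a *: hmon (shift J i (s a)).
Proof.
move=> hC hJ.
pose s (a : 'I_N) : 'I_m := enum_val (widen_ord hC a).
have sinj : injective s by move=> a b /enum_val_inj /(congr1 val) /= /val_inj.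
have [u hu] := general_linform (row i H) sinj.
exists u, s; split => [a|]; first exact: enum_valP.
have -> : hmon J = hyp i * hmon (fun t => J t - (t == i))%N.
  by rewrite -hmon1 -hmonD; apply: hmon_eq => t /=; case: eqP => [->|] /=; lia.
rewrite {1}/hyp hu mulr_suml; apply: eq_bigr => a _.
by rewrite -scalerAl mulrC -hmon1 -hmonD.
Qed.

Lemma hmon_in_hq_span J : (\sum_t J t)%N = (2 * delta).+1 -> hq_span (hmon J).
Proof.
move: {2}(sumsq J).+1 (ltnSn (sumsq J)) => K.
elim: K J => [|K IH] J //= hK hs.
have [/forallP hle|] := boolP [forall t, J t <= 2]%N; first exact: hmon_le2_in_hq_span.
rewrite negb_forall => /existsP [i0]; rewrite -ltnNge => hi0.
have [i _ hmax] := @arg_maxnP _ i0 xpredT J isT.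
have h3 : (3 <= J i)%N by apply: leq_trans hi0 (hmax i0 isT).
have {}hmax t : (J t <= J i)%N by exact: hmax.
set Bs := [set t | (t != i) && (J i <= (J t).+1)%N].
have [hB|] := leqP (#|Bs| + 2) delta; last exact: hmon_crowded_in_hq_span.
(* trade the factor h_i against n + 1 forms h_t whose exponent is at most J i - 2 *)
have iB : i \notin Bs by rewrite inE eqxx.
have hC : (N <= #|~: (i |: Bs)|)%N.
  by have := cardsC (i |: Bs); rewrite cardsU1 iB card_ord; lia.
have Ji0 : (0 < J i)%N by lia.
have [u [s [sC ->]]] := hmon_shift hC Ji0.
apply: subspace_sum hq_span_subspace _ => a _; apply: subspaceZ hq_span_subspace _.
have : s a \notin i |: Bs by rewrite -in_setC.
rewrite in_setU1 negb_or eq_sym => /andP [ias saB].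
have hJs : (J (s a) + 2 <= J i)%N.
  by move: saB; rewrite inE eq_sym ias /= -ltnNge; lia.
apply: IH; last by rewrite sum_shift.
by apply: leq_trans (sumsq_shift ias hJs) _.
Qed.

Definition hmon_span d (F : poly) :=
  forall S, subspace S -> (forall J, (\sum_t J t)%N = d -> S (hmon J)) -> S F.

Lemma hmon_span1 : hmon_span 0 1.
Proof. by move=> S hS hJ; rewrite -hmon0; apply: hJ; rewrite big1. Qed.

Lemma hmon_spanM d1 d2 F G : hmon_span d1 F -> hmon_span d2 G -> hmon_span (d1 + d2) (F * G).
Proof.
move=> hF hG S hS hJ.
apply: (hF (fun X => S (X * G))).
  split; first by rewrite mul0r; apply: subspace0.
  by move=> a x y Sx Sy; rewrite mulrDl -scalerAl; apply: (proj2 hS).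
move=> J1 hJ1; apply: (hG (fun Y => S (hmon J1 * Y))).
  split; first by rewrite mulr0; apply: subspace0.
  by move=> a x y Sx Sy; rewrite mulrDr -scalerAr; apply: (proj2 hS).
move=> J2 hJ2; rewrite -hmonD; apply: hJ.
by rewrite big_split /= hJ1 hJ2.
Qed.

Lemma hmon_spanX j : hmon_span 1 'X_j.
Proof.
have hle : (N <= m)%N by lia.
pose s (a : 'I_N) : 'I_m := widen_ord hle a.
have sinj : injective s by move=> a b /(congr1 val) /= /val_inj.
have eX : 'X_j = linform (delta_mx 0 j : 'rV[k]_N).
  rewrite /linform (bigD1 j) //= mxE !eqxx scale1r big1 ?addr0 // => t tj.
  by rewrite mxE (negbTE tj) andbF scale0r.
have [u hu] := general_linform (delta_mx 0 j) sinj.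
rewrite eX hu => S hS hJ; apply: subspace_sum => // a _; apply: subspaceZ => //.
by rewrite -hmon1; apply: hJ; rewrite (bigD1 (s a)) //= eqxx big1 // => t /negbTE ->.
Qed.

Lemma hmon_span_monomial (mm : 'X_{1..N}) : hmon_span (mdeg mm) 'X_[mm].
Proof.
have hX j e : hmon_span e ('X_j ^+ e).
  elim: e => [|e IH]; first by rewrite expr0; exact: hmon_span1.
  by rewrite exprS -add1n; apply: hmon_spanM (hmon_spanX j) IH.
rewrite mpolyXE_id mdegE; elim: (index_enum _) => [|j r IH].
  by rewrite !big_nil; exact: hmon_span1.
by rewrite !big_cons; apply: hmon_spanM (hX _ _) IH.
Qed.

Lemma homog_in_hq_span F : F \is (2 * delta).+1.-homog -> hq_span F.
Proof.
move=> hF; rewrite [F]mpolyE big_seq; apply: subspace_sum hq_span_subspace _ => mm hm.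
apply: subspaceZ hq_span_subspace _.
apply: (hmon_span_monomial hq_span_subspace) => J.
by rewrite (dhomog_mf hF hm); exact: hmon_in_hq_span.
Qed.

Lemma indep_qforms : indep qforms.
Proof.
apply: indep_map qindex_uniq _ => c hc p hp; apply: (singular_qforms_coef_eq0 _ hp).
by rewrite hc => L _ v _ _ j; rewrite mderiv0 meval0.
Qed.

Lemma spans_qforms_singular_eq0 F : spans qforms F -> singular_form F -> F = 0.
Proof.
move=> /(spans_map qindex_uniq) [c ->] [_ hs].
by rewrite big1_seq // => p /andP [_ hp]; rewrite (singular_qforms_coef_eq0 hs hp) scale0r.
Qed.

Lemma singular_form_spans_hprods F : singular_form F -> spans admissible_hprods F.
Proof.
move=> hW; have /spans_catP [F1 [F2 [h1 h2 eF]]] := homog_in_hq_span (proj1 hW).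
suff F20 : F2 = 0 by rewrite eF F20 addr0.
apply: spans_qforms_singular_eq0 h2 _; have -> : F2 = F - F1 by rewrite eF addrC addKr.
apply: subspaceB singular_form_subspace hW _.
apply: spans_min singular_form_subspace _ h1 => x /mapP [e]; rewrite mem_enum => he ->.
exact: hprod_singular.
Qed.

Section HprodBasis.
Variable B : seq poly.
Hypotheses (indepB : indep B) (B_hprods : forall x, x \in B -> x \in admissible_hprods)
  (hprods_B : forall x, x \in admissible_hprods -> spans B x).

Lemma spans_B_singular F : spans B F -> singular_form F.
Proof.
apply: spans_min singular_form_subspace _ => x /B_hprods /mapP [e]; rewrite mem_enum => he ->.
exact: hprod_singular.
Qed.

Lemma has_dim_singular_forms : has_dim singular_form (size B).
Proof.
exists B; split=> //; split; first by move=> F /(spans_mem (s := B)) /spans_B_singular.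
split; first exact: indep_lin_indep.
move=> F /singular_form_spans_hprods hF; apply/in_spanE.
exact: spans_min (spans_subspace B) hprods_B hF.
Qed.

Lemma has_dim_homogeneous :
  has_dim (fun F : poly => homogeneous (2 * delta).+1 F) (size B + size qforms).
Proof.
exists (B ++ qforms); split; first by rewrite size_cat.
split; last split.
- move=> F; rewrite mem_cat => /orP [/(spans_mem (s := B)) /spans_B_singular [] //|].
  by move=> /mapP [p hp ->]; rewrite homogeneousE qform_homog //; apply/eqP; rewrite -qindexP.
- apply/indep_lin_indep/indep_cat => // [|F /spans_B_singular hF hq].
    exact: indep_qforms.
  exact: spans_qforms_singular_eq0.
move=> F; rewrite homogeneousE => /homog_in_hq_span hF; apply/in_spanE.
apply: spans_min (spans_subspace _) _ hF => x; rewrite mem_cat => /orP [/hprods_B|hx].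
  exact: spans_catl.
by apply: spans_mem; rewrite mem_cat hx orbT.
Qed.

End HprodBasis.

Theorem singular_forms_basis :
  (exists a b : nat,
      has_dim (fun F : poly => homogeneous (2 * delta).+1 F) a /\
      has_dim singular_form b /\ a = (b + N * 'C(m, n))%N) /\
  (forall e, admissible delta e -> singular_form (hprod H e)) /\
  (forall F, singular_form F -> exists c : {ffun 'I_m -> 'I_3} -> k,
      F = \sum_(e | admissible delta e) c e *: hprod H e).
Proof.
have [B [indepB B_hprods hprods_B]] := indep_spanning_subseq admissible_hprods.
split; last split; first exists (size B + size qforms)%N, (size B).
- split; first exact: has_dim_homogeneous.
  by split; [exact: has_dim_singular_forms|rewrite size_qforms mulnC].
- exact: hprod_singular.
move=> F /singular_form_spans_hprods /(spans_map (enum_uniq _)) [c ->]; exists c.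
by rewrite big_enum /=; apply: eq_bigl => e; rewrite inE.
Qed.

End General.
End Hyperplanes.

Section GenericityCondition.
Variables (k : fieldType) (m n : nat).
Local Notation N := n.+1.

Definition minor_poly (s : {ffun 'I_N -> 'I_m}) : 'M[{mpoly k[m * N]}]_N :=
  \matrix_(a, b) 'X_(mxvec_index (s a) b).

Definition minors_poly : {mpoly k[m * N]} :=
  \prod_(s : {ffun 'I_N -> 'I_m} | injectiveb s) \det (minor_poly s).

Lemma meval_minors_poly (H : 'M[k]_(m, N)) :
  minors_poly.@[fun j => mxvec H 0 j] =
  \prod_(s : {ffun 'I_N -> 'I_m} | injectiveb s) \det (\matrix_(a, b) H (s a) b).
Proof.
rewrite rmorph_prod; apply: eq_bigr => s _; rewrite -det_map_mx.
by congr (\det _); apply/matrixP => a b; rewrite !mxE /= mevalXU mxvecE.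
Qed.

Lemma natr_inj_pchar0 : [pchar k] =i pred0 -> injective (fun x : nat => x%:R : k).
Proof.
move=> /pcharf0P hk x y /eqP; wlog xy : x y / (x <= y)%N => [hw|].
  by have [/hw|/ltnW /hw h] := leqP x y; [|rewrite eq_sym => /h ->].
rewrite eq_sym -subr_eq0 -natrB // hk subn_eq0 => yx.
by apply/eqP; rewrite eqn_leq xy yx.
Qed.

Lemma minors_poly_neq0 : [pchar k] =i pred0 -> minors_poly != 0.
Proof.
move=> hk; apply: contraTneq isT => P0.
(* a Vandermonde matrix with distinct nodes 0, 1, ..., m-1 has no vanishing maximal minor *)
pose H0 : 'M[k]_(m, N) := \matrix_(i, b) ((i : nat)%:R) ^+ b.
suff : minors_poly.@[fun j => mxvec H0 0 j] != 0 by rewrite P0 meval0 eqxx.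
rewrite meval_minors_poly; apply/prodf_neq0 => s /injectiveP sinj.
have -> : \matrix_(a, b) H0 (s a) b = (Vandermonde N (\row_a ((s a : nat)%:R)))^T.
  by apply/matrixP => a b; rewrite !mxE.
rewrite det_tr det_Vandermonde; apply/prodf_neq0 => i _; apply/prodf_neq0 => j ij.
rewrite !mxE subr_eq0; apply/eqP => /(natr_inj_pchar0 hk) /val_inj /sinj eij.
by rewrite eij ltnn in ij.
Qed.

Lemma minors_poly_general (H : 'M[k]_(m, N)) :
  minors_poly.@[fun j => mxvec H 0 j] != 0 ->
  forall s : 'I_N -> 'I_m, injective s -> \det (\matrix_(a, b) H (s a) b) != 0.
Proof.
rewrite meval_minors_poly => /prodf_neq0 hf s sinj.
have -> : \matrix_(a, b) H (s a) b = \matrix_(a, b) H (finfun s a) b.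
  by apply/matrixP => a b; rewrite !mxE ffunE.
by apply: hf; apply/injectiveP => a b; rewrite !ffunE => /sinj.
Qed.

End GenericityCondition.

Unset Implicit Arguments. Set Strict Implicit.

Theorem corollary7p8 (k : closedFieldType) (hk : [pchar k] =i pred0)
    (delta n : nat) (hdelta : (1 <= delta)%N) (hn : (1 <= n)%N) :
  exists P : {mpoly k[(delta + n) * n.+1]}, P != 0 /\
  forall H : 'M[k]_(delta + n, n.+1),
    P.@[fun j => mxvec H 0 j] != 0 ->
    let W := fun F : {mpoly k[n.+1]} =>
               homogeneous (2 * delta).+1 F /\ singular_on_Z H F in
    (exists a b : nat,
        has_dim (fun F : {mpoly k[n.+1]} => homogeneous (2 * delta).+1 F) a /\
        has_dim W b /\ a = (b + n.+1 * 'C(delta + n, n))%N) /\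
    (forall e, admissible delta e -> W (hprod H e)) /\
    (forall F, W F -> exists c : {ffun 'I_(delta + n) -> 'I_3} -> k,
        F = \sum_(e | admissible delta e) c e *: hprod H e).
Proof.
exists (minors_poly k (delta + n) n); split; first exact: minors_poly_neq0.
move=> H /minors_poly_general hgen.
exact: (singular_forms_basis hk hgen hdelta).
Qed.
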